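(* Let $d\ge 3$ and $h\ge 1$. The exponent of the sandpile group $G(d,h)$ equals $$(d-1)^h\cdot \operatorname{lcm}\{\,d\,\theta(d,h+1),\ \theta(d,h),\ \theta(d,h-1),\ \dots,\ \theta(d,2)\,\},$$ where $\theta(d,n) := \frac{(d-1)^n-1}{d-2}$.
   Context: Let $\mathcal{T}(d,h)$ be the rooted tree in which the root $0$ has $d$ children, every vertex at distance $1,\dots,h-1$ from the root has $d-1$ children, and the vertices at distance $h$ (leaves) have no children (the ball of radius $h$ in the infinite $d$-regular tree). Let $V$ be its vertex set, $A$ its adjacency matrix, $\Delta := dI-A$, and $\Lambda\subset\mathbb{Z}^V$ the lattice spanned by the rows of $\Delta$. Then $G(d,h) := \mathbb{Z}^V/\Lambda$. The exponent of a finite abelian group is the least common multiple of the orders of its elements (equivalently the largest order of an element). *)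

From mathcomp Require Import all_boot all_order all_algebra.
Set Implicit Arguments. Unset Strict Implicit. Unset Printing Implicit Defensive.
Import Order.TTheory GRing.Theory Num.Theory.

(* Vertices of T(d,h) are encoded as sequences of child indices along the
   path from the root: the root is [::]; the root's children are [:: i]
   with i < d; a vertex s at depth k (1 <= k < h) has children rcons s i
   with i < d-1. *)
Fixpoint tree_level (d k : nat) : seq (seq nat) :=
  match k with
  | 0 => [:: [::]]
  | 1 => [seq [:: i] | i <- iota 0 d]
  | k'.+1 => [seq rcons s i | s <- tree_level d k', i <- iota 0 d.-1]
  end.

Definition tree_verts (d h : nat) : seq (seq nat) :=
  flatten [seq tree_level d k | k <- iota 0 h.+1].

Definition tree_parent (u v : seq nat) : bool :=
  (v != [::]) && (take (size v).-1 v == u).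

Definition tree_adj (u v : seq nat) : bool := tree_parent u v || tree_parent v u.

Definition Delta (d : nat) (u v : seq nat) : int :=
  (d%:Z * (u == v)%:Z - (tree_adj u v)%:Z)%R.

(* x (an element of Z^V, given by its values on V) lies in the lattice
   Lambda spanned by the rows of Delta. *)
Definition in_Lambda (d h : nat) (x : seq nat -> int) : Prop :=
  exists c : seq nat -> int, forall v, v \in tree_verts d h ->
    x v = (\sum_(u <- tree_verts d h) c u * Delta d u v)%R.

Definition annihilates (d h e : nat) : Prop :=
  forall x : seq nat -> int, in_Lambda d h (fun v => (e%:Z * x v)%R).

Definition is_exponent_G (d h e : nat) : Prop :=
  0 < e /\ annihilates d h e /\ forall e', 0 < e' -> annihilates d h e' -> e <= e'.

(* theta(d,n) = ((d-1)^n - 1)/(d-2)  (exact division for d >= 3) *)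
Definition theta (d n : nat) : nat := ((d.-1) ^ n - 1) %/ (d - 2).

Definition lcm_seq (s : seq nat) : nat := foldr lcmn 1 s.

(* Write q = d - 1 and N k = 1 + q + ... + q^(k-1) = theta(d,k).  Over Q the
   Laplacian Δ is invertible, and its column at a leaf l is explicit: at a vertex
   u it equals a_m * N (h + 1 - |u|), where m is the depth at which the path to u
   leaves the path to l, a_0 = 1 / (d q^h N (h+1)) and
   a_(m+1) - a_m = 1 / (N (h+1-m) N (h-m)).
   Upper bound: with e = q^h lcm(d N(h+1), N h, ..., N 2) every e a_m is an
   integer, because 1 / (N k N (k+1)) = (1 / N k - 1 / N (k+1)) / q^k; hence e
   times each leaf indicator lies in Λ, and the rows of Δ propagate this from the
   leaves to all vertices.
   Lower bound: if e kills the indicator of the leaf 0...0, pairing with the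
   columns at leaves branching off at every depth m shows that all e a_m are
   integers, i.e. d q^h N (h+1) and every N k N (k+1) divide e; as q is coprime
   to d and to every N k, this means q^h lcm(...) divides e. *)

From mathcomp Require Import all_boot all_order all_algebra.
From mathcomp Require Import zify ring.
Set Implicit Arguments. Unset Strict Implicit. Unset Printing Implicit Defensive.
Import Order.TTheory GRing.Theory Num.Theory.

Lemma sum_mul_eq_seq (R : pzSemiRingType) (T : eqType) (s : seq T) x (F : T -> R) :
  uniq s -> x \in s -> (\sum_(u <- s) F u * (u == x)%:R = F x)%R.
Proof.
move=> us xs; rewrite (bigD1_seq x) //= eqxx mulr1 big1 ?addr0 //.
by move=> u /negbTE ->; rewrite mulr0.
Qed.

Lemma sum_iota_eq (R : pzRingType) n c (F : bool -> R) : (c < n)%N ->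
  (\sum_(i <- iota 0 n) F (c == i) = F true + n.-1%:R * F false)%R.
Proof.
move=> cn.
have E i : F (c == i) = (F false + (F true - F false) * (i == c)%:R)%R.
  by rewrite eq_sym; case: (i == c); rewrite ?mulr1 ?mulr0 ?addr0 // addrC subrK.
under eq_bigr do rewrite E.
rewrite big_split /= sum_mul_eq_seq ?mem_iota ?iota_uniq //.
rewrite big_const_seq count_predT size_iota iter_addr_0.
by case: n cn => // n _; rewrite mulr_natl mulrSr -addrA subrKC addrC.
Qed.

Lemma dvdn_Qint (m n : nat) : 0 < n -> (n %| m) = ((m%:R / n%:R : rat) \is a Num.int)%R.
Proof.
move=> n_gt0; apply/idP/idP => [/Qnat_dvd | /intrP [z hz]].
  by rewrite natrEint => /andP[].
have nn : (n%:R : rat) != 0%R by rewrite pnatr_eq0 -lt0n.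
have /(congr1 absz) : (m%:Z = z * n%:Z)%R.
  by apply: (@intr_inj rat); rewrite intrM -!pmulrn -hz divfK.
by rewrite abszM /= => ->; apply: dvdn_mull.
Qed.

Lemma dvdn_lcm_seq s n : (lcm_seq s %| n) = all (dvdn^~ n) s.
Proof. by elim: s => [|a s IH] /=; rewrite ?dvd1n // dvdn_lcm IH. Qed.

Lemma lcm_seq_gt0 s : all (leq 1) s -> 0 < lcm_seq s.
Proof. by elim: s => //= a s IH /andP[a_gt0 /IH]; rewrite lcmn_gt0 a_gt0. Qed.

Lemma coprime_lcm_seq p s : all (coprime p) s -> coprime p (lcm_seq s).
Proof.
elim: s => [|a s IH] /=; first by rewrite coprimen1.
case/andP=> pa /IH ps; apply: coprime_dvdr (_ : lcmn a _ %| a * lcm_seq s) _.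
  by rewrite dvdn_lcm dvdn_mulr ?dvdn_mull.
by rewrite coprimeMr pa.
Qed.

Fixpoint repunit (q k : nat) : nat := if k is k'.+1 then q * repunit q k' + 1 else 0.

Lemma repunit_gt0 q k : 0 < k -> 0 < repunit q k.
Proof. by case: k => // k _; rewrite /= addn1. Qed.

Lemma repunitSr q k : repunit q k.+1 = repunit q k + q ^ k.
Proof.
elim: k => [|k IH]; first by rewrite /= muln0.
change (q * repunit q k.+1 + 1 = repunit q k.+1 + q ^ k.+1).
by rewrite {1}IH [repunit q k.+1]/= expnS; ring.
Qed.

Lemma repunit_recurrence q k : q.+1 * repunit q k.+1 = repunit q k.+2 + q * repunit q k.
Proof. by rewrite /=; ring. Qed.

Lemma coprime_repunit q k : 0 < k -> coprime q (repunit q k).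
Proof.
case: k => // k _; rewrite /= -coprime_modr mulnC modnMDl coprime_modr.
exact: coprimen1.
Qed.

Lemma theta_repunit d k : 2 < d -> theta d k = repunit d.-1 k.
Proof.
move=> hd; rewrite /theta.
have -> : d.-1 = (d - 2).+1 by lia.
suff -> : (d - 2).+1 ^ k - 1 = (d - 2) * repunit (d - 2).+1 k by rewrite mulKn //; lia.
elim: k => [|k IH]; first by rewrite expn0 muln0.
have := expn_gt0 (d - 2).+1 k; rewrite ltn0Sn /= expnS; nia.
Qed.

(** * Vertices of T(d,h) *)

Definition tree_word (d : nat) (s : seq nat) : bool :=
  if s is a :: t then (a < d) && all (fun i => i < d.-1) t else true.

Lemma tree_word_rcons d s i :
  tree_word d (rcons s i) = tree_word d s && (i < (if s is [::] then d else d.-1)).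
Proof.
case: s => [|a t]; first by rewrite /= andbT.
rewrite rcons_cons /= all_rcons.
by case: (a < d); case: (i < d.-1); case: (all _ t).
Qed.

Lemma tree_word_take d n s : tree_word d s -> tree_word d (take n s).
Proof.
case: s n => [|a t] [|n] //= /andP[-> /allP ht].
by apply/allP => x /mem_take /ht.
Qed.

Lemma tree_levelSS d k :
  tree_level d k.+2 = [seq rcons s i | s <- tree_level d k.+1, i <- iota 0 d.-1].
Proof. by []. Qed.

Lemma mem_tree_level d k (s : seq nat) : (s \in tree_level d k) = (size s == k) && tree_word d s.
Proof.
elim: k s => [|[|k] IH] s.
- by rewrite mem_seq1; case: s.
- apply/mapP/idP => [[i] | ].
    by rewrite mem_iota => /andP[_ hi] ->; rewrite /= hi.
  by case: s => [|a [|b t]] //=; rewrite andbT => ha; exists a; rewrite ?mem_iota.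
case/lastP: s => [|s x].
  by apply/negbTE/negP => /allpairsP[[[|? ?] ?] [_ _]].
rewrite tree_levelSS size_rcons eqSS tree_word_rcons.
apply/allpairsP/idP => [[[s' x'] [/= hs' hx' /rcons_inj [-> ->]]] | /and3P[hs hw hx]].
  move: hs' hx'; rewrite IH mem_iota => /andP[/eqP hs ->] /=.
  by rewrite hs eqxx; case: (s') hs.
exists (s, x); split; rewrite ?IH ?hs ?hw // mem_iota.
by move/eqP: hs hx; case: (s).
Qed.

Lemma uniq_tree_level d k : uniq (tree_level d k).
Proof.
elim: k => [|[|k] IH] //.
  by rewrite /= map_inj_uniq ?iota_uniq // => a b [].
rewrite tree_levelSS; apply: allpairs_uniq => //; first exact: iota_uniq.
by move=> [a b] [c e] _ _ /= /rcons_inj [-> ->].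
Qed.

Lemma mem_tree_verts d h (s : seq nat) : (s \in tree_verts d h) = tree_word d s && (size s <= h).
Proof.
apply/flatten_mapP/idP => [[k] | /andP[hw hs]].
  by rewrite mem_iota mem_tree_level => /andP[_ hk] /andP[/eqP -> ->].
by exists (size s); rewrite ?mem_iota ?mem_tree_level ?eqxx.
Qed.

Lemma uniq_tree_verts d h : uniq (tree_verts d h).
Proof.
rewrite /tree_verts; elim: h.+1 => [|n IH] //.
rewrite -addn1 iotaD map_cat flatten_cat cat_uniq IH /= cats0 uniq_tree_level andbT.
apply/hasPn => s; rewrite mem_tree_level => /andP[/eqP hs _].
apply/negP => /flatten_mapP [k]; rewrite mem_iota mem_tree_level => /andP[_ hk] /andP[/eqP hk' _].
by move: hk; rewrite -hk' hs add0n ltnn.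
Qed.

Lemma tree_word_nth d (s : seq nat) j : tree_word d s -> (j < size s)%N ->
  (nth 0 s j < (if j == 0 then d else d.-1))%N.
Proof.
case: s => [|a t] //= /andP[ha /allP ht]; case: j => //= j hj.
by apply: ht; rewrite mem_nth.
Qed.

Definition parent (v : seq nat) : seq nat := take (size v).-1 v.

Definition nchildren (d h : nat) (v : seq nat) : nat :=
  if size v < h then (if v is [::] then d else d.-1) else 0.

Definition children (d h : nat) (v : seq nat) : seq (seq nat) :=
  [seq rcons v i | i <- iota 0 (nchildren d h v)].

Lemma parent_rcons v i : parent (rcons v i) = v.
Proof. by rewrite /parent size_rcons -cats1 take_size_cat. Qed.

Lemma parent_tree_verts d h v : v \in tree_verts d h -> parent v \in tree_verts d h.
Proof.
rewrite !mem_tree_verts size_take => /andP[hw hs]; rewrite tree_word_take //=.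
by case: ifP => // _; apply: leq_trans hs; apply: leq_pred.
Qed.

Lemma uniq_children d h v : uniq (children d h v).
Proof. by rewrite map_inj_uniq ?iota_uniq //; apply: rcons_injr. Qed.

Lemma mem_children d h v u : v \in tree_verts d h ->
  (u \in children d h v) = (u \in tree_verts d h) && tree_parent v u.
Proof.
rewrite /tree_parent; case/lastP: u => [|u x] hv.
  by apply/negbTE/negP => /mapP [i _]; case: (v).
rewrite size_rcons /= -cats1 take_size_cat // cats1.
move: hv; rewrite !mem_tree_verts tree_word_rcons size_rcons /children /nchildren.
move=> /andP[hv hs]; have -> : rcons u x != [::] by case: u.
apply/mapP/idP => [[i] | /and3P[/andP[/andP[hu hx] hsu] _ /eqP eu]].
  rewrite mem_iota add0n => hi /rcons_inj [-> ->].
  by rewrite eqxx hv /= andbT; case: ifP hi => //= _; rewrite andbT.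
by subst u; exists x; rewrite // mem_iota add0n hsu; case: (v) hx.
Qed.

Lemma tree_parent_asym u v : tree_parent u v -> ~~ tree_parent v u.
Proof.
rewrite /tree_parent => /andP[nv /eqP <-]; apply/negP => /andP[_ /eqP].
move=> /(congr1 size); rewrite !size_take_min.
by move: nv; rewrite -size_eq0; case: (size v) => // n _; lia.
Qed.

Fixpoint lcp (s t : seq nat) : nat :=
  if (s, t) is (a :: s', b :: t') then (if a == b then (lcp s' t').+1 else 0) else 0.

Lemma lcp_leql s t : lcp s t <= size s.
Proof. by elim: s t => [|a s IH] [|b t] //=; case: ifP => // _; apply: IH. Qed.

Lemma lcp_leqr s t : lcp s t <= size t.
Proof. by elim: s t => [|a s IH] [|b t] //=; case: ifP => // _; apply: IH. Qed.

Lemma lcp_refl s : lcp s s = size s.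
Proof. by elim: s => //= a s ->; rewrite eqxx. Qed.

Lemma lcp_take n s t : lcp (take n s) t = minn n (lcp s t).
Proof.
elim: s n t => [|a s IH] [|n] [|b t] //=; rewrite ?minn0 ?min0n //.
by case: ifP => _; rewrite ?IH ?minnSS ?minn0.
Qed.

Lemma lcp_rcons s x t : lcp (rcons s x) t =
  if lcp s t == size s then size s + ((size s < size t) && (nth 0 t (size s) == x))
  else lcp s t.
Proof.
elim: s t => [|a s IH] [|b t] //=; first by rewrite eq_sym; case: ifP.
by case: ifP => _ //=; rewrite IH eqSS; case: ifP.
Qed.

Lemma lcp_eq s t : lcp s t = size s -> size s = size t -> s = t.
Proof.
elim: s t => [|a s IH] [|b t] //=; case: ifP => // /eqP -> [] hst [] /(IH _ hst).
by move->.
Qed.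

(** * The Laplacian Δ *)

Section Laplacian.
Local Open Scope ring_scope.

Lemma intr_Delta (R : pzRingType) d u v : (Delta d u v)%:~R =
  d%:R * (u == v)%:R - (tree_parent u v)%:R - (tree_parent v u)%:R :> R.
Proof.
rewrite /Delta /tree_adj.
case: (boolP (tree_parent u v)) => [/tree_parent_asym/negbTE -> | _] /=;
  by rewrite -!natz rmorphB rmorphM /= !rmorph_nat subr0.
Qed.

Lemma sum_mul_Delta (R : comPzRingType) d h (g : seq nat -> R) v :
  v \in tree_verts d h ->
  \sum_(u <- tree_verts d h) g u * (Delta d u v)%:~R =
  d%:R * g v - (if v is [::] then 0 else g (parent v)) - \sum_(u <- children d h v) g u.
Proof.
move=> hv; under eq_bigr do rewrite intr_Delta !mulrBr.
rewrite !big_split /= !sumrN; congr (_ - _ - _).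
- under eq_bigr do rewrite mulrCA.
  by rewrite -mulr_sumr sum_mul_eq_seq // uniq_tree_verts.
- case: v hv => [|a t] hv.
    by rewrite big1 // => u _; rewrite /tree_parent /= mulr0.
  rewrite -(sum_mul_eq_seq g (uniq_tree_verts d h) (parent_tree_verts hv)).
  by apply: eq_bigr => u _; rewrite /tree_parent /= eq_sym.
rewrite [LHS](eq_bigr (fun u => if tree_parent v u then g u else 0)); last first.
  by move=> u _; case: (tree_parent v u); rewrite ?mulr1 ?mulr0.
rewrite -big_mkcond -big_filter; apply: perm_big; apply: uniq_perm.
- exact/filter_uniq/uniq_tree_verts.
- exact: uniq_children.
by move=> u; rewrite mem_filter mem_children // andbC.
Qed.

Lemma Delta_sym d u v : Delta d u v = Delta d v u.
Proof. by rewrite /Delta eq_sym /tree_adj orbC. Qed.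

Lemma Delta_row d h w v : w \in tree_verts d h -> v \in tree_verts d h ->
  Delta d w v = d%:R * (w == v)%:R - (if w is [::] then 0 else (parent w == v)%:R)
                - \sum_(u <- children d h w) (u == v)%:R.
Proof.
move=> hw hv; have := sum_mul_Delta (fun u => (u == v)%:R : int) hw.
have -> : \sum_(u <- tree_verts d h) (u == v)%:R * (Delta d u w)%:~R = Delta d w v.
  rewrite Delta_sym -(sum_mul_eq_seq (Delta d ^~ w) (uniq_tree_verts d h) hv).
  by apply: eq_bigr => u _; rewrite mulrC intz.
by move->.
Qed.

End Laplacian.

(** * Green's function of Δ at a leaf *)

Section GreenFunction.
Local Open Scope ring_scope.
Variables d h : nat.
Hypothesis d_gt2 : (2 < d)%N.
Hypothesis h_gt0 : (0 < h)%N.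

Local Notation q := d.-1.
Local Notation N k := ((repunit d.-1 k)%:R : rat).

Fixpoint green_coef (m : nat) : rat :=
  if m is m'.+1 then green_coef m' + (N (h.+1 - m') * N (h - m'))^-1
  else (d%:R * q%:R ^+ h * N h.+1)^-1.

(* [green l] solves [green l Δ = δ_l].  Below the branch point [lcp u l] it is
   proportional to [N (h + 1 - |u|)], which is Δ-harmonic there and vanishes one
   level below the leaves; [green_coef] is forced by the equations along the
   path to [l]. *)
Definition green (l u : seq nat) : rat := green_coef (lcp u l) * N (h.+1 - size u).

Lemma natr_d : d%:R = q%:R + 1 :> rat.
Proof. by rewrite natr1 prednK //; lia. Qed.

Lemma repunitr_neq0 k : (0 < k)%N -> N k != 0.
Proof. by move=> k_gt0; rewrite pnatr_eq0 -lt0n repunit_gt0. Qed.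

Lemma repunitrS k : N k.+1 = q%:R * N k + 1.
Proof. by rewrite /= natrD natrM. Qed.

Lemma repunitr_recurrence k : d%:R * N k.+1 = N k.+2 + q%:R * N k.
Proof.
have -> : d%:R = q.+1%:R :> rat by rewrite prednK //; lia.
by rewrite -natrM repunit_recurrence natrD natrM.
Qed.

Lemma green_coef_root :
  d%:R * (green_coef 0 * N h.+1) - (green_coef 1 * N h + q%:R * (green_coef 0 * N h)) = 0.
Proof.
cbn [green_coef]; rewrite !subn0.
have q_gt0 : (0 < q)%N by lia.
have Nh := repunitr_neq0 h_gt0; have NSh := repunitr_neq0 (ltn0Sn h).
have qh : q%:R ^+ h != 0 :> rat by rewrite expf_neq0 // pnatr_eq0 -lt0n.
move: NSh; rewrite repunitSr natrD natrX natr_d => NSh.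
by field; rewrite NSh qh Nh -natr_d pnatr_eq0 andbT; lia.
Qed.

(* [green_coef j] times the recurrence of [N], plus two increments of
   [green_coef] that cancel each other. *)
Lemma green_coef_mid j : (0 < j < h)%N ->
  d%:R * (green_coef j * N (h.+1 - j)) - green_coef j.-1 * N (h.+1 - j.-1)
  - (green_coef j.+1 * N (h - j) + q.-1%:R * (green_coef j * N (h - j))) = 0.
Proof.
case: j => // i /andP[_ ih]; cbn [green_coef].
have [k hk] : exists k, h = (i.+1 + k.+1)%N by exists (h - i.+2)%N; lia.
have -> : (h.+1 - i.+1 = k.+2)%N by lia.
have -> : (h.+1 - i = k.+3)%N by lia.
have -> : (h - i.+1 = k.+1)%N by lia.
have -> : (h - i = k.+2)%N by lia.
have N1 := repunitr_neq0 (ltn0Sn k); have N2 := repunitr_neq0 (ltn0Sn k.+1).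
have N3 := repunitr_neq0 (ltn0Sn k.+2).
have -> : q.-1%:R = q%:R - 1 :> rat by rewrite -subn1 natrB //; lia.
rewrite natr_d; move: N2 N3; rewrite ![N k.+3]repunitrS ![N k.+2]repunitrS => N2 N3.
by field; rewrite N1 N2 N3.
Qed.

Lemma green_coef_leaf i : h = i.+1 ->
  d%:R * (green_coef i.+1 * N 1) - green_coef i * N 2 = 1.
Proof.
move=> hi; cbn [green_coef].
have -> : (h.+1 - i = 2)%N by lia.
have -> : (h - i = 1)%N by lia.
have N1 : N 1 = 1 by rewrite repunitrS mulr0 add0r.
have N2 : N 2 = d%:R by rewrite repunitrS N1 mulr1 natr_d.
have dn0 : d%:R != 0 :> rat by rewrite pnatr_eq0 -lt0n; lia.
by rewrite N1 N2; field.
Qed.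

Lemma green_parent l v :
  green l (parent v) = green_coef (minn (size v).-1 (lcp v l)) * N (h.+1 - (size v).-1).
Proof. by rewrite /green /parent lcp_take size_take_min (minn_idPl (leq_pred _)). Qed.

Lemma sum_green_children l v : \sum_(u <- children d h v) green l u =
  \sum_(i <- iota 0 (nchildren d h v)) green_coef (lcp (rcons v i) l) * N (h - size v).
Proof. by rewrite big_map; apply: eq_bigr => i _; rewrite /green size_rcons subSS. Qed.

Lemma green_harmonic_off (l v : seq nat) : v \in tree_verts d h -> (lcp v l < size v)%N ->
  d%:R * green l v - green l (parent v) - \sum_(u <- children d h v) green l u = 0.
Proof.
rewrite mem_tree_verts => /andP[_ hv] hlt.
rewrite sum_green_children; under eq_bigr do rewrite lcp_rcons (ltn_eqF hlt).
rewrite big_const_seq count_predT size_iota iter_addr_0 green_parent /green.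
have hm : (lcp v l <= (size v).-1)%N by lia.
rewrite (minn_idPr hm).
have nchE : N (h - size v) *+ nchildren d h v = q%:R * N (h - size v).
  rewrite /nchildren; case: ltnP => [_ | hs].
    by case: (v) hlt => [|a t] // _; rewrite mulr_natl.
  have -> : (h - size v = 0)%N by lia.
  by rewrite mulr0n mulr0.
have [k hk] : exists k, (h - size v = k)%N by exists (h - size v)%N.
rewrite -mulrnAr nchE hk (_ : h.+1 - size v = k.+1)%N; last by lia.
rewrite (_ : h.+1 - (size v).-1 = k.+2)%N; last by lia.
by rewrite mulrCA repunitr_recurrence; ring.
Qed.

Lemma green_harmonic_path (l v : seq nat) : l \in tree_verts d h -> size l = h ->
  v \in tree_verts d h -> lcp v l = size v ->
  d%:R * green l v - (if v is [::] then 0 else green l (parent v))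
  - \sum_(u <- children d h v) green l u = (v == l)%:R.
Proof.
move=> hl sl hv hp; have vh : (size v <= h)%N by move: hv; rewrite mem_tree_verts => /andP[].
have parentE : green l (parent v) = green_coef (size v).-1 * N (h.+1 - (size v).-1).
  by rewrite green_parent hp (minn_idPl (leq_pred _)).
case: (ltnP (size v) h) => hvh; last first.
  have hvh' : size v = h by apply/eqP; rewrite eqn_leq vh.
  have nv : v != [::] by rewrite -size_eq0 hvh' -lt0n.
  have -> : (if v is [::] then 0 else green l (parent v)) = green l (parent v) by case: (v) nv.
  rewrite parentE hvh' (_ : h.+1 - h.-1 = 2)%N; last by lia.
  have -> : v = l by apply: lcp_eq; rewrite // sl.
  rewrite eqxx /children /nchildren sl ltnn big_nil subr0 /green lcp_refl sl subSnn.
  by rewrite -[h in green_coef h](@prednK h) // green_coef_leaf // prednK.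
have -> : (v == l) = false by apply/negbTE; apply: contraTneq hvh => ->; rewrite sl ltnn.
rewrite sum_green_children; under eq_bigr do rewrite lcp_rcons hp eqxx sl hvh /=.
have lvn : (nth 0 l (size v) < nchildren d h v)%N.
  move: hl; rewrite mem_tree_verts /nchildren hvh => /andP[/tree_word_nth + _].
  by rewrite sl => /(_ _ hvh); case: (v).
rewrite (sum_iota_eq (fun b => green_coef (size v + b) * N (h - size v)) lvn).
rewrite addn1 addn0 /nchildren hvh.
case: v hv hp vh hvh parentE {lvn} => [|a t] _ hp _ hvh parentE.
  by rewrite /green hp subr0 [size _]/= !subn0 green_coef_root.
by rewrite parentE /green hp green_coef_mid ?hvh.
Qed.

Lemma green_mul_Delta (l v : seq nat) : l \in tree_verts d h -> size l = h ->
  v \in tree_verts d h ->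
  \sum_(u <- tree_verts d h) green l u * (Delta d u v)%:~R = (v == l)%:R.
Proof.
move=> hl sl hv; rewrite sum_mul_Delta //.
have [hlt | hge] := ltnP (lcp v l) (size v).
  have -> : (v == l) = false.
    by apply/negbTE; apply: contraTneq hlt => ->; rewrite lcp_refl ltnn.
  by case: v hv hlt => // a t hv hlt; rewrite green_harmonic_off.
by apply: green_harmonic_path => //; apply/eqP; rewrite eqn_leq lcp_leql hge.
Qed.

Lemma green_coef_int (L : nat) : (d * repunit q h.+1 %| L)%N ->
    (forall k, (0 < k <= h)%N -> (repunit q k %| L)%N) ->
  forall m, (m <= h)%N -> (q ^ h * L)%:R * green_coef m \is a Num.int.
Proof.
move=> dNL NL.
have {}NL k : (0 < k <= h.+1)%N -> (repunit q k %| L)%N.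
  case/andP=> k_gt0; rewrite leq_eqVlt => /orP[/eqP -> | ?]; last by rewrite NL ?k_gt0.
  exact: dvdn_trans (dvdn_mull _ _) dNL.
elim=> [|m IH] hm; cbn [green_coef].
  have dN_gt0 : (0 < d * repunit q h.+1)%N by rewrite muln_gt0 repunit_gt0 // andbT; lia.
  have qh : q%:R ^+ h != 0 :> rat by rewrite expf_neq0 // pnatr_eq0 -lt0n; lia.
  have NSh := repunitr_neq0 (ltn0Sn h).
  have dn0 : d%:R != 0 :> rat by rewrite pnatr_eq0 -lt0n; lia.
  have -> : (q ^ h * L)%:R * (d%:R * q%:R ^+ h * N h.+1)^-1 = L%:R / (d * repunit q h.+1)%:R.
    by rewrite !natrM natrX; field; rewrite NSh qh dn0.
  by rewrite -dvdn_Qint.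
have [k hk] : exists k, h = (m + k.+1)%N by exists (h - m.+1)%N; lia.
have -> : (h.+1 - m = k.+2)%N by lia.
have -> : (h - m = k.+1)%N by lia.
rewrite mulrDr rpredD ?IH 1?ltnW //.
have N1 := repunitr_neq0 (ltn0Sn k); have N2 := repunitr_neq0 (ltn0Sn k.+1).
(* since N (k+2) - N (k+1) = q^(k+1) divides q^h *)
have -> : (q ^ h * L)%:R * (N k.+2 * N k.+1)^-1 =
    (q ^ m)%:R * (L%:R / N k.+1 - L%:R / N k.+2).
  have E : N k.+2 = N k.+1 + q%:R ^+ k.+1 by rewrite repunitSr natrD natrX.
  rewrite hk expnD !natrM !natrX -[q%:R ^+ k.+1](addKr (N k.+1)) -E.
  by field; rewrite N1 N2.
apply: rpredM; first exact: natr_int.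
by apply: rpredB; rewrite -dvdn_Qint ?repunit_gt0 // NL //; lia.
Qed.

End GreenFunction.

(** * The lattice Λ *)

Section Lattice.
Local Open Scope ring_scope.
Variables d h : nat.
Local Notation V := (tree_verts d h).

Lemma in_Lambda_ext (x y : seq nat -> int) :
  {in V, x =1 y} -> in_Lambda d h x -> in_Lambda d h y.
Proof. by move=> xy [c hc]; exists c => v hv; rewrite -xy // hc. Qed.

Lemma in_Lambda0 : in_Lambda d h (fun _ => 0).
Proof. by exists (fun _ => 0) => v _; rewrite big1 // => u _; rewrite mul0r. Qed.

Lemma in_LambdaD (x y : seq nat -> int) :
  in_Lambda d h x -> in_Lambda d h y -> in_Lambda d h (fun v => x v + y v).
Proof.
move=> [c1 h1] [c2 h2]; exists (fun u => c1 u + c2 u) => v hv.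
by rewrite h1 // h2 // -big_split; apply: eq_bigr => u _; rewrite mulrDl.
Qed.

Lemma in_LambdaMl z (x : seq nat -> int) :
  in_Lambda d h x -> in_Lambda d h (fun v => z * x v).
Proof.
move=> [c hc]; exists (fun u => z * c u) => v hv.
by rewrite hc // mulr_sumr; apply: eq_bigr => u _; rewrite mulrA.
Qed.

Lemma in_Lambda_sum (T : eqType) (s : seq T) (X : T -> seq nat -> int) :
  {in s, forall w, in_Lambda d h (X w)} -> in_Lambda d h (fun v => \sum_(w <- s) X w v).
Proof.
elim: s => [|a s IH] Xs.
  by apply: in_Lambda_ext in_Lambda0 => v _; rewrite big_nil.
apply: in_Lambda_ext (in_LambdaD (Xs a (mem_head _ _)) (IH _)) => [v _ | w ws].
  by rewrite big_cons.
by apply: Xs; rewrite inE ws orbT.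
Qed.

Lemma in_Lambda_Delta w : w \in V -> in_Lambda d h (Delta d w).
Proof.
move=> hw; exists (fun u => (u == w)%:R) => v hv.
by rewrite -(sum_mul_eq_seq (fun u => Delta d u v) (uniq_tree_verts d h) hw);
  apply: eq_bigr => u _; rewrite mulrC.
Qed.

Lemma annihilates_indicator (e : nat) :
  {in V, forall w, in_Lambda d h (fun v => e%:Z * (v == w)%:R)} -> annihilates d h e.
Proof.
move=> he x; apply: (@in_Lambda_ext (fun v => \sum_(w <- V) x w * (e%:Z * (v == w)%:R))).
  move=> v hv; under eq_bigr do rewrite mulrCA (eq_sym v).
  by rewrite -mulr_sumr sum_mul_eq_seq ?uniq_tree_verts.
by apply: in_Lambda_sum => w hw; apply/in_LambdaMl/he.
Qed.

Lemma annihilates_dvdn (e e' : nat) : (e %| e')%N -> annihilates d h e -> annihilates d h e'.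
Proof.
case/dvdnP=> k -> he x; apply: in_Lambda_ext (in_LambdaMl k%:Z (he x)) => v _.
by rewrite PoszM mulrA.
Qed.

End Lattice.

(** * The exponent *)

Definition branch_leaf (h m : nat) : seq nat := nseq m 0 ++ nseq (h - m) 1.

Lemma size_branch_leaf h m : m <= h -> size (branch_leaf h m) = h.
Proof. by move=> hm; rewrite size_cat !size_nseq; lia. Qed.

Lemma lcp_branch_leaf h m : m <= h -> lcp (nseq h 0) (branch_leaf h m) = m.
Proof. by elim: m h => [|m IH] [|h] //= hm; rewrite IH. Qed.

Lemma branch_leaf_tree_verts d h m : 2 < d -> 0 < h -> m <= h ->
  branch_leaf h m \in tree_verts d h.
Proof.
move=> d_gt2 h_gt0 hm; rewrite mem_tree_verts size_branch_leaf // leqnn andbT.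
case: m hm => [|m] hm; last by rewrite /= all_cat !all_nseq; apply/and3P; split; lia.
by case: h h_gt0 {hm} => // h _; rewrite /branch_leaf /= all_nseq; apply/andP; split; lia.
Qed.

Definition lcm_theta (d h : nat) : nat :=
  lcm_seq (d * theta d h.+1 :: [seq theta d k | k <- iota 2 h.-1]).

Definition sandpile_exponent (d h : nat) : nat := d.-1 ^ h * lcm_theta d h.

Section Exponent.
Variables d h : nat.
Hypotheses (d_gt2 : 2 < d) (h_gt0 : 0 < h).
Local Notation q := d.-1.
Local Notation L := (lcm_theta d h).

Lemma dvdn_lcm_theta n : (L %| n) =
  (d * repunit q h.+1 %| n) && all (fun k => repunit q k %| n) (iota 2 h.-1).
Proof.
rewrite dvdn_lcm_seq /= all_map theta_repunit //; congr (_ && _).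
by apply: eq_in_all => k _; rewrite /= theta_repunit.
Qed.

Lemma dvdn_root_lcm_theta : d * repunit q h.+1 %| L.
Proof. by have := dvdnn L; rewrite dvdn_lcm_theta => /andP[]. Qed.

Lemma repunit_dvdn_lcm_theta k : 0 < k <= h.+1 -> repunit q k %| L.
Proof.
case/andP=> k_gt0 k_le; have := dvdnn L; rewrite dvdn_lcm_theta => /andP[dNL /allP NL].
have [k_lt2 | k_ge2] := ltnP k 2; first by rewrite (_ : k = 1) /= ?muln0 ?dvd1n //; lia.
have [k_le_h | k_gt_h] := ltnP k h.+1; first by apply: NL; rewrite mem_iota; lia.
by rewrite (_ : k = h.+1); [exact: dvdn_trans (dvdn_mull _ _) dNL | lia].
Qed.

Lemma lcm_theta_gt0 : 0 < L.
Proof.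
apply: lcm_seq_gt0; rewrite /= all_map theta_repunit // muln_gt0 repunit_gt0 // andbT.
apply/andP; split; first lia.
by apply/allP => k; rewrite mem_iota /= theta_repunit // => hk; apply: repunit_gt0; lia.
Qed.

Lemma coprime_lcm_theta : coprime q L.
Proof.
apply: coprime_lcm_seq; rewrite /= all_map theta_repunit // coprimeMr coprime_repunit //.
rewrite -{2}(@prednK d) ?coprimenS /=; last lia.
by apply/allP => k; rewrite mem_iota /= theta_repunit // => hk; apply: coprime_repunit; lia.
Qed.

Lemma sandpile_exponent_gt0 : 0 < sandpile_exponent d h.
Proof. by rewrite muln_gt0 expn_gt0 lcm_theta_gt0 andbT; apply/orP; left; lia. Qed.

Local Open Scope ring_scope.
Local Notation V := (tree_verts d h).
Local Notation E := (sandpile_exponent d h).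

Lemma in_Lambda_leaf l : l \in V -> size l = h -> in_Lambda d h (fun v => E%:Z * (v == l)%:R).
Proof.
move=> hl sl; pose z u := numq (E%:R * green d h l u).
have zE u : (z u)%:~R = E%:R * green d h l u.
  apply: numqK; rewrite /green mulrA rpredM ?natr_int //.
  apply: green_coef_int => //; [exact: dvdn_root_lcm_theta | | by rewrite -sl lcp_leqr].
  by move=> k hk; apply: repunit_dvdn_lcm_theta; lia.
exists z => v hv; apply: (@intr_inj rat); rewrite rmorph_sum /=.
under eq_bigr do rewrite intrM zE -mulrA.
by rewrite -mulr_sumr green_mul_Delta // intrM -pmulrn rmorph_nat.
Qed.

Lemma in_Lambda_indicator w : w \in V -> in_Lambda d h (fun v => E%:Z * (v == w)%:R).
Proof.
have [n] := ubnP (h - size w); elim: n w => // n IH w /ltnSE hn hw.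
have /andP[ww sw] : tree_word d w && (size w <= h)%N by rewrite -mem_tree_verts.
have [sw_lt | ] := ltnP (size w) h; last by move=> ?; apply: in_Lambda_leaf; lia.
set c := rcons w 0.
have hc : c \in V.
  by rewrite mem_tree_verts tree_word_rcons size_rcons ww sw_lt; case: (w); lia.
have deeper u : u \in c :: children d h c -> in_Lambda d h (fun v => E%:Z * (v == u)%:R).
  rewrite inE => /predU1P[-> | hu]; apply: IH => //; first by rewrite size_rcons; lia.
    by case/mapP: hu => i _ ->; rewrite !size_rcons; lia.
  by move: hu; rewrite mem_children // => /andP[].
(* Row [c] of Δ is d δ_c - δ_w - Σ_(u child of c) δ_u, so it expresses δ_w
   through indicators of deeper vertices. *)
apply: (@in_Lambda_ext d h (fun v => d%:Z * (E%:Z * (v == c)%:R)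
    + (-1) * \sum_(u <- children d h c) E%:Z * (v == u)%:R + (- E%:Z) * Delta d c v)).
  move=> v hv; rewrite (Delta_row hc hv) (_ : (if c is [::] then _ else _) = (parent c == v)%:R).
    rewrite parent_rcons -mulr_sumr !(eq_sym v); under eq_bigr do rewrite eq_sym.
    by rewrite -natz; ring.
  by rewrite /c; case: (w).
apply/in_LambdaD/in_LambdaMl/in_Lambda_Delta/hc; apply/in_LambdaD/in_LambdaMl/in_Lambda_sum.
- by apply/in_LambdaMl/deeper/mem_head.
by move=> u hu; apply: deeper; rewrite inE hu orbT.
Qed.

Lemma annihilates_sandpile_exponent : annihilates d h E.
Proof. by apply: annihilates_indicator => w; apply: in_Lambda_indicator. Qed.

Lemma Lambda_coef_leaf (x c : seq nat -> int) l : l \in V -> size l = h ->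
  {in V, forall v, x v = \sum_(u <- V) c u * Delta d u v} ->
  (c l)%:~R = \sum_(v <- V) (x v)%:~R * green d h l v.
Proof.
move=> hl sl hx.
have inner u : u \in V ->
    \sum_(v <- V) (c u * Delta d u v)%:~R * green d h l v = (c u)%:~R * (u == l)%:R.
  move=> hu; rewrite -(green_mul_Delta _ _ hl sl hu) // big_distrr /=.
  by apply: eq_bigr => v _; rewrite intrM [Delta d v u]Delta_sym; ring.
rewrite big_seq; under eq_bigr => v hv do rewrite hx // rmorph_sum mulr_suml.
rewrite -big_seq exchange_big /= big_seq; under eq_bigr => u hu do rewrite inner //.
by rewrite -big_seq sum_mul_eq_seq ?uniq_tree_verts.
Qed.

Lemma annihilates_green_coef_int e : annihilates d h e ->
  forall m, (m <= h)%N -> e%:R * green_coef d h m \is a Num.int.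
Proof.
move=> he m hm; have [c hc] := he (fun v => (v == nseq h 0)%:R).
have l0 : nseq h 0 \in V.
  rewrite mem_tree_verts size_nseq leqnn andbT.
  by case: (h) h_gt0 => // h' _; rewrite /= all_nseq; apply/andP; split; lia.
have := Lambda_coef_leaf (branch_leaf_tree_verts d_gt2 h_gt0 hm) (size_branch_leaf hm) hc.
rewrite big_seq; under eq_bigr => v hv do rewrite intrM -mulrA.
rewrite -big_seq -mulr_sumr; under eq_bigr do rewrite rmorph_nat mulrC.
rewrite sum_mul_eq_seq ?uniq_tree_verts // /green lcp_branch_leaf // size_nseq subSnn.
by rewrite /= muln0 mulr1 -pmulrn => <-; apply: intr_int.
Qed.

Lemma sandpile_exponent_dvdn e :
  (forall m, (m <= h)%N -> e%:R * green_coef d h m \is a Num.int) -> (E %| e)%N.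
Proof.
move=> he.
have root : (d * q ^ h * repunit q h.+1 %| e)%N.
  rewrite dvdn_Qint; last by rewrite !muln_gt0 expn_gt0 repunit_gt0 // andbT; lia.
  by rewrite !natrM natrX; apply: (he 0%N).
have step k : (0 < k <= h)%N -> (repunit q k.+1 * repunit q k %| e)%N.
  move=> /andP[k_gt0 k_le]; rewrite dvdn_Qint; last by rewrite muln_gt0 !repunit_gt0.
  have := rpredB (he (h - k)%N.+1 _) (he (h - k)%N _).
  cbn [green_coef]; rewrite -mulrBr addrAC subrr add0r natrM.
  have -> : (h.+1 - (h - k) = k.+1)%N by lia.
  have -> : (h - (h - k) = k)%N by lia.
  by apply; lia.
rewrite /sandpile_exponent Gauss_dvd ?coprimeXl ?coprime_lcm_theta // dvdn_lcm_theta.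
apply/and3P; split; first by apply: dvdn_trans root; rewrite -mulnA mulnCA dvdn_mulr.
  by apply: dvdn_trans root; rewrite mulnAC dvdn_mulr.
apply/allP => k; rewrite mem_iota => hk.
by apply: dvdn_trans (step k _); [exact: dvdn_mull | lia].
Qed.

Lemma annihilatesP e : annihilates d h e <-> (E %| e)%N.
Proof.
split=> [/annihilates_green_coef_int/sandpile_exponent_dvdn // | E_dvd_e].
exact: annihilates_dvdn E_dvd_e annihilates_sandpile_exponent.
Qed.

End Exponent.

Theorem theorem2p3 (d h : nat) (hd : 3 <= d) (hh : 1 <= h) :
  is_exponent_G d h
    ((d.-1) ^ h * lcm_seq (d * theta d h.+1 :: [seq theta d k | k <- iota 2 h.-1])).
Proof.
split; first exact: sandpile_exponent_gt0.
split; first exact/annihilatesP.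
by move=> e e_gt0 /annihilatesP/dvdn_leq; apply.
Qed.
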